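(* Let $D\ge2$, let $\eta_{\mu\nu}$ be a nondegenerate symmetric bilinear form on $\mathbb{R}^D$ with inverse $\eta^{\mu\nu}$, and let $a_{\mu\nu\rho\lambda}$ be a real tensor on $\mathbb{R}^D$ satisfying $$a_{\mu\nu\rho\lambda}=-a_{\nu\mu\rho\lambda}=-a_{\mu\nu\lambda\rho}=a_{\rho\lambda\mu\nu},\qquad a_{\mu\nu\rho\lambda}+a_{\mu\rho\lambda\nu}+a_{\mu\lambda\nu\rho}=0.$$ Suppose that for all $u,v\in\mathbb{R}^D$, $$a_{\mu\rho\nu\lambda}\,\eta^{\mu\nu}v^\rho v^\lambda\,(u\cdot v)^2+a_{\mu\rho\nu\lambda}\,u^\mu u^\nu v^\rho v^\lambda\,(v\cdot v)=0,$$ where $u\cdot v=\eta_{\alpha\beta}u^\alpha v^\beta$. Then $a_{\mu\nu\rho\lambda}=0$.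
   Context: This polynomial identity is the condition (in the variables $u^\mu=\partial_zX^\mu$, $v^\mu=\partial_{\bar z}X^\mu$) for the operator $:\!\big(a_{\mu\nu\rho\lambda}\partial_zX^\mu\partial_{\bar z}X^\nu\partial_zX^\rho\partial_{\bar z}X^\lambda\big)/\big(\eta_{\alpha\beta}\partial_zX^\alpha\partial_{\bar z}X^\beta\big)\!:$ in the free boson theory with target metric $\eta$ to be a conformal primary, i.e. the condition $\eta^{\mu\nu}\partial^2F/\partial u^\mu\partial u^\nu=0$ for $F(u,v)=a_{\mu\rho\nu\lambda}u^\mu u^\nu v^\rho v^\lambda/(u\cdot v)$. The symmetry conditions on $a$ are those of an areal metric (perturbation) with the cyclicity condition. *)

From HB Require Import structures.
From mathcomp Require Import all_boot all_order all_algebra.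
From mathcomp Require Import reals.
Set Implicit Arguments. Unset Strict Implicit. Unset Printing Implicit Defensive.
Import Order.TTheory GRing.Theory Num.Theory.
Local Open Scope ring_scope.

Definition etadot (R : realType) (D : nat) (eta : 'M[R]_D)
  (u v : 'I_D -> R) : R :=
  \sum_(a < D) \sum_(b < D) eta a b * u a * v b.

Definition areal_sym (R : realType) (D : nat)
  (a : 'I_D -> 'I_D -> 'I_D -> 'I_D -> R) : Prop :=
  forall m n r l : 'I_D,
    [/\ a m n r l = - a n m r l,
        a m n r l = - a m n l r,
        a m n r l = a r l m n &
        a m n r l + a m r l n + a m l n r = 0].

Definition primary_poly (R : realType) (D : nat) (eta : 'M[R]_D)
  (a : 'I_D -> 'I_D -> 'I_D -> 'I_D -> R) (u v : 'I_D -> R) : R :=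
  (\sum_(m < D) \sum_(r < D) \sum_(n < D) \sum_(l < D)
      a m r n l * (invmx eta) m n * v r * v l) * (etadot eta u v) ^+ 2
  + (\sum_(m < D) \sum_(r < D) \sum_(n < D) \sum_(l < D)
      a m r n l * u m * u n * v r * v l) * etadot eta v v.

(* Put Q(u, v) = a_{m r n l} u^m u^n v^r v^l. Antisymmetry of a in its first
   pair gives Q(v, v) = 0, so the hypothesis at u = v kills the trace term, and
   eliminating it yields Q(u, v) (v.v)^3 = 0. Restricted to a line v + t w with
   w.w <> 0 (such a w exists since eta is nondegenerate), both factors are
   quadratic polynomials in t and the second one is nonzero, so Q(u, .) vanishes.
   Polarizing Q = 0 in u and in v and using the pair symmetry makes a
   antisymmetric in its second and fourth slots, which together with the cyclic
   identity forces a = 0. *)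

From HB Require Import structures.
From mathcomp Require Import all_boot all_order all_algebra.
From mathcomp Require Import boolp reals.
From mathcomp Require Import ring lra.
Set Implicit Arguments. Unset Strict Implicit. Unset Printing Implicit Defensive.
Import Order.TTheory GRing.Theory Num.Theory.
Local Open Scope ring_scope.

Section BilinearForm.
Variables (R : comPzRingType) (D : nat).
Implicit Types (c : 'I_D -> 'I_D -> R) (u v w x y : 'I_D -> R).

Definition bil c x y : R := \sum_(m < D) \sum_(n < D) c m n * x m * y n.

Definition deltav (i : 'I_D) : 'I_D -> R := fun k => (k == i)%:R.

Lemma sum_mul_deltav (f : 'I_D -> R) j : \sum_(n < D) f n * deltav j n = f j.
Proof.
rewrite (bigD1 j) //= big1 => [|n /negbTE n_j]; last by rewrite /deltav n_j mulr0.
by rewrite /deltav eqxx mulr1 addr0.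
Qed.

Lemma bil_deltav c i j : bil c (deltav i) (deltav j) = c i j.
Proof.
rewrite /bil -(sum_mul_deltav (fun m => c m j) i); apply: eq_bigr => m _.
rewrite -(sum_mul_deltav (c m) j) mulr_suml; apply: eq_bigr => n _; ring.
Qed.

Lemma bilD_form c c' x y :
  bil (fun m n => c m n + c' m n) x y = bil c x y + bil c' x y.
Proof.
rewrite /bil -big_split; apply: eq_bigr => m _; rewrite -big_split.
by apply: eq_bigr => n _; rewrite !mulrDl.
Qed.

Lemma bil_line c v w t :
  bil c (fun k => v k + t * w k) (fun k => v k + t * w k) =
  bil c v v + (bil c v w + bil c w v) * t + bil c w w * t ^+ 2.
Proof.
rewrite /bil mulrDl !mulr_suml -!big_split; apply: eq_bigr => m _.
by rewrite !mulr_suml -!big_split; apply: eq_bigr => n _ /=; ring.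
Qed.

Lemma bil_polar c : (forall u, bil c u u = 0) -> forall i j, c i j + c j i = 0.
Proof.
move=> c0 i j; have := c0 (deltav i); have := c0 (deltav j).
have := c0 (fun k => deltav i k + 1 * deltav j k).
rewrite bil_line !bil_deltav mulr1 expr1n mulr1 => polar cjj cii.
by rewrite cii cjj add0r addr0 in polar.
Qed.

Variable a : 'I_D -> 'I_D -> 'I_D -> 'I_D -> R.

Definition quartic u v : R := \sum_(m < D) \sum_(r < D) \sum_(n < D) \sum_(l < D)
  a m r n l * u m * u n * v r * v l.

Lemma quartic_bil_l u v :
  quartic u v = bil (fun m n => bil (fun r l => a m r n l) v v) u u.
Proof.
rewrite /quartic /bil; apply: eq_bigr => m _; rewrite exchange_big /=.
apply: eq_bigr => n _; rewrite !mulr_suml; apply: eq_bigr => r _.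
by rewrite !mulr_suml; apply: eq_bigr => l _; ring.
Qed.

Lemma quartic_bil_r u v :
  quartic u v = bil (fun r l => bil (fun m n => a m r n l) u u) v v.
Proof.
rewrite /quartic /bil exchange_big /=; apply: eq_bigr => r _.
under eq_bigr => m _ do rewrite exchange_big /=.
rewrite exchange_big /=; apply: eq_bigr => l _.
rewrite !mulr_suml; apply: eq_bigr => m _.
by rewrite !mulr_suml; apply: eq_bigr => n _; ring.
Qed.

Lemma quartic_eq0_polar : (forall u v, quartic u v = 0) ->
  forall m n r l, a m r n l + a n r m l + a m l n r + a n l m r = 0.
Proof.
move=> a0 m n r l.
have sym_mn v : bil (fun s t => a m s n t + a n s m t) v v = 0.
  rewrite bilD_form.
  apply: (bil_polar (c := fun i j => bil (fun s t => a i s j t) v v)).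
  by move=> u; rewrite -quartic_bil_l.
by have := bil_polar sym_mn r l; rewrite addrA.
Qed.

End BilinearForm.

Section CharZeroForm.
Variables (R : numDomainType) (D : nat).
Implicit Types (c q : 'I_D -> 'I_D -> R) (u v w : 'I_D -> R).

Lemma addrr_eq0 (x : R) : x + x = 0 -> x = 0.
Proof. by rewrite -mulr2n => /eqP; rewrite mulrn_eq0 => /eqP. Qed.

Lemma sym_form_eq0 c : (forall i j, c i j = c j i) ->
  (forall u, bil c u u = 0) -> forall i j, c i j = 0.
Proof. by move=> c_sym c0 i j; apply: addrr_eq0; rewrite {2}c_sym bil_polar. Qed.

Lemma quartic_diag_eq0 (a : 'I_D -> 'I_D -> 'I_D -> 'I_D -> R) :
  (forall m r n l, a r m n l = - a m r n l) -> forall v, quartic a v v = 0.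
Proof.
move=> a_anti v; apply: addrr_eq0; rewrite [X in _ + X]/quartic exchange_big /=.
rewrite -big_split big1 // => m _; rewrite -big_split big1 // => r _.
rewrite -big_split big1 // => n _; rewrite -big_split big1 // => l _.
by rewrite /= a_anti; ring.
Qed.

Lemma poly_eq0_of_horner0 (p : {poly R}) : (forall t, p.[t] = 0) -> p = 0.
Proof.
move=> p0; apply: (@roots_geq_poly_eq0 _ p [seq i%:R | i <- iota 0 (size p)]).
- by apply/allP => x /mapP [i _ ->]; rewrite /root p0.
- by rewrite map_inj_uniq ?iota_uniq // => i j /eqP; rewrite eqr_nat => /eqP.
- by rewrite size_map size_iota.
Qed.

Definition line_poly c v w : {poly R} :=
  (bil c v v)%:P + (bil c v w + bil c w v)%:P * 'X + (bil c w w)%:P * 'X^2.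

Lemma horner_line_poly c v w t :
  (line_poly c v w).[t] = bil c (fun k => v k + t * w k) (fun k => v k + t * w k).
Proof. by rewrite bil_line /line_poly !hornerE. Qed.

Lemma coef0_line_poly c v w : (line_poly c v w)`_0 = bil c v v.
Proof. by rewrite /line_poly !coefE /= !mulr0 !addr0. Qed.

Lemma coef2_line_poly c v w : (line_poly c v w)`_2 = bil c w w.
Proof. by rewrite /line_poly !coefE /= mulr0 mulr1 !add0r. Qed.

Lemma qform_eq0_of_mul c q w k : bil q w w != 0 ->
  (forall v, bil c v v * bil q v v ^+ k = 0) -> forall v, bil c v v = 0.
Proof.
move=> qw0 cq0 v.
have : line_poly c v w * line_poly q v w ^+ k = 0.
  by apply: poly_eq0_of_horner0 => t; rewrite hornerM horner_exp !horner_line_poly.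
have q_neq0 : line_poly q v w != 0.
  by apply: contraNneq qw0 => q0; rewrite -(coef2_line_poly q v) q0 coef0.
move/eqP; rewrite mulf_eq0 expf_eq0 (negbTE q_neq0) andbF orbF => /eqP c0.
by rewrite -(coef0_line_poly c v w) c0 coef0.
Qed.

End CharZeroForm.

Lemma eliminate_trace (R : comPzRingType) (t q e f : R) :
  t * f ^+ 2 + q * e = 0 -> t * e ^+ 2 = 0 -> q * e ^+ 3 = 0.
Proof.
move=> tfqe te.
have -> : q * e ^+ 3 = e ^+ 2 * (t * f ^+ 2 + q * e) - f ^+ 2 * (t * e ^+ 2) by ring.
by rewrite tfqe te !mulr0 subr0.
Qed.

Lemma unitmx_sym_anisotropic (R : numDomainType) n (A : 'M[R]_n.+1) :
  A^T = A -> A \in unitmx -> exists w, bil A w w != 0.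
Proof.
move=> A_sym A_unit; have /existsNP[w /eqP Aw] : ~ forall w, bil A w w = 0.
  move=> A_iso; move: A_unit; rewrite (_ : A = 0) ?unitmxE ?det0 ?unitr0 //.
  apply/matrixP => i j; rewrite mxE; apply: sym_form_eq0 A_iso i j => {}i {}j.
  by rewrite -{1}A_sym mxE.
by exists w.
Qed.

Lemma areal_sym_eq0_of_polar (R : realType) D (a : 'I_D -> 'I_D -> 'I_D -> 'I_D -> R) :
  areal_sym a -> (forall m n r l, a m r n l + a n r m l + a m l n r + a n l m r = 0) ->
  forall m n r l, a m n r l = 0.
Proof.
move=> a_sym a_polar.
have swap24 i k j p : a i k j p = - a i p j k.
  have [_ _ e1 _] := a_sym j k i p; have [_ _ e2 _] := a_sym j p i k.
  have := a_polar i j k p; lra.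
move=> m n r l; have [_ anti _ cyc] := a_sym m n r l.
have [_ anti' _ _] := a_sym m r l n.
have := swap24 m r n l; have := swap24 m n l r; lra.
Qed.

Theorem mainTheorem9 (R : realType) (D : nat) (eta : 'M[R]_D)
  (a : 'I_D -> 'I_D -> 'I_D -> 'I_D -> R) :
  (2 <= D)%N ->
  eta^T = eta ->
  eta \in unitmx ->
  areal_sym a ->
  (forall u v : 'I_D -> R, primary_poly eta a u v = 0) ->
  forall m n r l : 'I_D, a m n r l = 0.
Proof.
case: D eta a => [//|D] eta a _ eta_sym eta_unit a_sym primary.
have quartic_diag v : quartic a v v = 0.
  by apply: quartic_diag_eq0 => m r n l; case: (a_sym r m n l).
have quartic_null u v : quartic a u v * etadot eta v v ^+ 3 = 0.
  move: (primary u v) (primary v v); rewrite /primary_poly -/(quartic a u v).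
  rewrite -/(quartic a v v) quartic_diag mul0r addr0; exact: (@eliminate_trace R).
have [w eta_w] := unitmx_sym_anisotropic eta_sym eta_unit.
have quartic0 u v : quartic a u v = 0.
  (* [etadot eta] is convertible to [bil eta]. *)
  rewrite quartic_bil_r; move: v; apply: (qform_eq0_of_mul (k := 3) eta_w) => v.
  by rewrite -quartic_bil_r; exact: quartic_null.
exact: areal_sym_eq0_of_polar a_sym (quartic_eq0_polar quartic0).
Qed.
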